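(* Let $\Gamma$ be a finite complete graph whose edges are coloured red, green and blue in an arbitrary manner. Then there is a finite group $G$ and an injective map $\iota$ from the vertex set of $\Gamma$ into $G$ such that, for distinct vertices $u,v$: if $\{u,v\}$ is red then $\iota(u),\iota(v)$ are adjacent in the enhanced power graph of $G$; if $\{u,v\}$ is green then $\iota(u),\iota(v)$ are adjacent in the commuting graph of $G$ but not in the enhanced power graph; if $\{u,v\}$ is blue then $\iota(u),\iota(v)$ are non-adjacent in the commuting graph of $G$.
   Context: For a group $G$: the commuting graph has vertex set $G$ with distinct $x,y$ adjacent iff $xy=yx$; the enhanced power graph has vertex set $G$ with distinct $x,y$ adjacent iff $\langle x,y\rangle$ is cyclic. *)

From mathcomp Require Import all_boot all_fingroup all_solvable.
Set Implicit Arguments. Unset Strict Implicit. Unset Printing Implicit Defensive.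

Inductive colour := Red | Green | Blue.

Definition epg_adj (gT : finGroupType) (x y : gT) : bool :=
  (x != y) && cyclic <<[set x; y]>>%g.

Definition comm_adj (gT : finGroupType) (x y : gT) : bool :=
  (x != y) && (x * y == y * x)%g.

From mathcomp Require Import all_boot all_fingroup all_solvable.
From mathcomp Require Import zify.
Set Implicit Arguments. Unset Strict Implicit. Unset Printing Implicit Defensive.

(* Realize the vertices as permutations of a disjoint union of blocks, one for
   each ordered pair k = (a, b) of vertices, carrying its own prime p.  On the
   block (a, b) the vertex a acts as the p-cycle of the segment [0, p), and b
   acts as the p-cycle of [p, 2p) if the edge is green, of the overlapping
   segment [1, p + 1) if it is blue, and trivially if it is red or a = b; all
   other vertices act trivially.  For a red edge the two permutations have
   disjoint supports, hence commute and have coprime orders, so they generate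
   the cyclic group <[uv]>.  For a green edge they commute, but killing all
   other blocks by a suitable power leaves two elements of order p that
   generate different subgroups, impossible in a cyclic group.  For a blue edge
   the overlapping p-cycles do not commute, and the diagonal blocks (a, a) make
   the map injective. *)

Definition next_prime m := s2val (prime_above m).

Definition nth_prime n := iter n.+1 next_prime 0.

Lemma nth_prime_prime n : prime (nth_prime n).
Proof. by rewrite /nth_prime /next_prime /=; case: prime_above. Qed.

Lemma nth_prime_inj : injective nth_prime.
Proof.
apply/incn_inj/leq_mono/(homo_ltn ltn_trans) => n.
by rewrite [nth_prime n.+1]/nth_prime /next_prime iterS; case: prime_above.
Qed.

Section DistinctPrimes.

Variables (I : finType) (pr : I -> nat).
Hypotheses (pr_prime : forall i, prime (pr i)) (pr_inj : injective pr).

Lemma prime_dvd_prod_distinct i (P : pred I) :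
  (pr i %| \prod_(j | P j) pr j) = P i.
Proof.
rewrite Euclid_dvd_prod // big_has_cond; apply/hasP/idP => [[j _]|Pi].
  by case/andP=> Pj; rewrite dvdn_prime2 // => /eqP/pr_inj ->.
by exists i; rewrite ?mem_index_enum //= Pi dvdnn.
Qed.

Lemma coprime_prod_disjoint (A B : {pred I}) :
  [disjoint A & B] -> coprime (\prod_(i in A) pr i) (\prod_(j in B) pr j).
Proof.
move=> dAB; apply: (big_ind (fun m => coprime m _)) => [|m n|i iA].
- exact: coprime1n.
- by rewrite coprimeMl => -> ->.
by rewrite prime_coprime // prime_dvd_prod_distinct (disjointFr dAB).
Qed.

End DistinctPrimes.

Definition segrot (a b i : nat) : nat :=
  if a <= i < b then (if i.+1 == b then a else i.+1) else i.

Lemma segrot_inj a b : injective (segrot a b).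
Proof. by move=> i j; rewrite /segrot; do !case: ifP; lia. Qed.

Lemma segrot_ltn a b n i : b <= n -> i < n -> segrot a b i < n.
Proof. by rewrite /segrot; do !case: ifP; lia. Qed.

Lemma segrotC a b a' b' i : b <= a' ->
  segrot a' b' (segrot a b i) = segrot a b (segrot a' b' i).
Proof. by rewrite /segrot; do !case: ifP; lia. Qed.

Lemma iter_segrot a b n i : iter n (segrot a b) i =
  if a <= i < b then a + (i - a + n) %% (b - a) else i.
Proof.
elim: n => [|n IHn] /=.
  by case: ifP => // /andP[ai ib]; rewrite addn0 modn_small; lia.
rewrite IHn; case: ifP => [/andP[ai ib]|]; last by rewrite /segrot => ->.
rewrite addnS -addn1 -(modnDml (i - a + n)).
have : (i - a + n) %% (b - a) < b - a by rewrite ltn_mod; lia.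
move: (_ %% _) => r ltr; have [rb|rb] := eqVneq r.+1 (b - a).
  by rewrite addn1 rb modnn /segrot; do !case: ifP; lia.
by rewrite addn1 modn_small /segrot; do ?case: ifP; lia.
Qed.
Lemma iter_segrot_period a b i : iter (b - a) (segrot a b) i = i.
Proof.
by rewrite iter_segrot; case: ifP => // /andP[ai ib]; rewrite modnDr modn_small; lia.
Qed.

Section SegmentPermutation.

Variable n : nat.
Local Open Scope group_scope.

Definition segperm_fun a b (i : 'I_n.+1) : 'I_n.+1 :=
  if b <= n.+1 then inord (segrot a b i) else i.

Lemma segperm_fun_inj a b : injective (segperm_fun a b).
Proof.
move=> i j; rewrite /segperm_fun; case: ifP => // bn /(congr1 (@nat_of_ord _)).
by rewrite !inordK ?segrot_ltn // => /segrot_inj/val_inj.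
Qed.

Definition segperm a b : {perm 'I_n.+1} := perm (@segperm_fun_inj a b).

Lemma segpermE a b (i : 'I_n.+1) : b <= n.+1 -> segperm a b i = segrot a b i :> nat.
Proof. by move=> bn; rewrite permE /segperm_fun bn inordK ?segrot_ltn. Qed.

Lemma segperm_out a b : n.+1 < b -> segperm a b = 1.
Proof.
rewrite ltnNge => /negPf nb.
by apply/permP => i; rewrite permE perm1 /segperm_fun nb.
Qed.

Lemma segpermX a b m (i : 'I_n.+1) :
  b <= n.+1 -> (segperm a b ^+ m) i = iter m (segrot a b) i :> nat.
Proof.
move=> bn; elim: m => [|m IHm]; first by rewrite expg0 perm1.
by rewrite expgSr permM segpermE // IHm.
Qed.

Lemma segperm_period a b : segperm a b ^+ (b - a) = 1.
Proof.
have [bn|nb] := leqP b n.+1; last by rewrite segperm_out ?expg1n.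
by apply/permP => i; apply: ord_inj; rewrite perm1 segpermX // iter_segrot_period.
Qed.

Lemma segpermX_eq1 a b m : a < b <= n.+1 -> (segperm a b ^+ m == 1) = (b - a %| m).
Proof.
case/andP=> ab bn; apply/eqP/idP => [am1|]; last first.
  by case/dvdnP=> q ->; rewrite mulnC expgM segperm_period expg1n.
have := congr1 (fun s : {perm 'I_n.+1} => nat_of_ord (s (inord a))) am1.
rewrite /= perm1 segpermX // inordK; last lia.
by rewrite iter_segrot ifT ?subnn ?add0n; lia.
Qed.

Lemma segpermX_disjoint_eq a b a' b' m m' : a < b <= a' -> a' <= b' <= n.+1 ->
  segperm a b ^+ m = segperm a' b' ^+ m' -> segperm a b ^+ m = 1.
Proof.
case/andP=> ab ba' /andP[a'b' b'n] e; apply/eqP; rewrite segpermX_eq1; last lia.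
have := congr1 (fun s : {perm 'I_n.+1} => nat_of_ord (s (inord a))) e.
rewrite /= !segpermX ?inordK ?iter_segrot ?subnn; try lia.
by do 2!case: ifP; lia.
Qed.

Lemma segperm_commute a b a' b' : b <= a' -> commute (segperm a b) (segperm a' b').
Proof.
move=> ba'; have [bn|nb] := leqP b n.+1; last first.
  by rewrite segperm_out //; apply: commute_sym; apply: commute1.
have [b'n|nb'] := leqP b' n.+1; last by rewrite (segperm_out _ nb'); apply: commute1.
by apply/permP => i; apply: ord_inj; rewrite !permM !segpermE // segrotC.
Qed.

Lemma segperm_shift_noncommute a b : a.+1 < b <= n ->
  segperm a b * segperm a.+1 b.+1 != segperm a.+1 b.+1 * segperm a b.
Proof.
case/andP=> ab bn; apply/eqP.
move=> /(congr1 (fun s : {perm 'I_n.+1} => nat_of_ord (s (inord a)))) /=.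
rewrite !permM !segpermE ?inordK //; try lia.
by rewrite /segrot; do !case: ifP; lia.
Qed.

End SegmentPermutation.

Section BlockPermutation.

Variables K X : finType.
Implicit Types f g : K -> {perm X}.
Local Open Scope group_scope.

Definition blockperm_fun f (t : K * X) : K * X := (t.1, f t.1 t.2).

Lemma blockperm_fun_inj f : injective (blockperm_fun f).
Proof. by move=> [k x] [k' x'] [<-] /perm_inj ->. Qed.

Definition blockperm f : {perm K * X} := perm (@blockperm_fun_inj f).

Lemma blockpermE f k x : blockperm f (k, x) = (k, f k x).
Proof. by rewrite permE. Qed.

Lemma eq_blockperm f g : f =1 g -> blockperm f = blockperm g.
Proof. by move=> fg; apply/permP => -[k x]; rewrite !blockpermE fg. Qed.

Lemma blockperm_inj f g : blockperm f = blockperm g -> f =1 g.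
Proof.
move=> fg k; apply/permP => x.
by have := congr1 (fun s : {perm K * X} => (s (k, x)).2) fg; rewrite /= !blockpermE.
Qed.

Lemma blockperm1 : blockperm (fun=> 1) = 1.
Proof. by apply/permP => -[k x]; rewrite blockpermE !perm1. Qed.

Lemma blockpermM f g : blockperm f * blockperm g = blockperm (fun k => f k * g k).
Proof. by apply/permP => -[k x]; rewrite permM !blockpermE permM. Qed.

Lemma blockpermX f m : blockperm f ^+ m = blockperm (fun k => f k ^+ m).
Proof.
elim: m => [|m IHm]; first by rewrite expg0 -blockperm1.
by rewrite expgSr IHm blockpermM; apply: eq_blockperm => k; rewrite expgSr.
Qed.

Lemma blockperm_commute f g :
  (forall k, commute (f k) (g k)) -> commute (blockperm f) (blockperm g).
Proof. by move=> fg; rewrite /commute !blockpermM; apply: eq_blockperm. Qed.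

Lemma order_blockperm_dvdn f (e : K -> nat) (A : {pred K}) :
    (forall k, f k ^+ e k = 1) -> (forall k, k \notin A -> f k = 1) ->
  #[blockperm f] %| \prod_(k in A) e k.
Proof.
move=> fe fA; rewrite order_dvdn blockpermX -blockperm1; apply/eqP/eq_blockperm => k.
have [kA|/fA ->] := boolP (k \in A); last exact: expg1n.
have ekA : e k %| \prod_(j in A) e j by rewrite (bigD1 k) //= dvdn_mulr.
by apply/eqP; rewrite -order_dvdn (dvdn_trans _ ekA) // order_dvdn fe.
Qed.

End BlockPermutation.

Section CyclicSubgroups.

Variable gT : finGroupType.
Implicit Types x y : gT.
Local Open Scope group_scope.

Lemma cyclic_commute_coprime x y :
  commute x y -> coprime #[x] #[y] -> cyclic <<[set x; y]>>.
Proof.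
move=> cxy co_xy; apply: cyclicS (cycle_cyclic (x * y)).
rewrite gen_subG /= cycleM // subUset !sub1set.
by rewrite (subsetP (mulG_subl _ _)) ?(subsetP (mulG_subr _ _)) ?cycle_id.
Qed.

Lemma cyclic_mem_cycle_prime (G : {group gT}) p x y :
    cyclic G -> prime p -> x \in G -> y \in G ->
    x ^+ p = 1 -> y ^+ p = 1 -> y != 1 ->
  x \in <[y]>.
Proof.
move=> cG p_pr Gx Gy xp yp ny1.
have [->|nx1] := eqVneq x 1; first exact: group1.
suff <- : <[x]> = <[y]> by apply: cycle_id.
apply/eqP; rewrite (eq_subG_cyclic cG) ?cycle_subG // -!orderE.
by rewrite (nt_prime_order p_pr xp nx1) (nt_prime_order p_pr yp ny1).
Qed.

End CyclicSubgroups.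

Section Construction.

Variables (V : finType) (c : V -> V -> colour).
Hypothesis c_sym : forall u v, c u v = c v u.

Definition edge_prime (k : V * V) := nth_prime (enum_rank k).

Definition edge_prime_prod := \prod_(k : V * V) edge_prime k.

Definition npoints := edge_prime_prod.*2.

Definition colour_offset (x : colour) (p : nat) : option nat :=
  match x with Red => None | Green => Some p | Blue => Some 1 end.

Definition offset (w : V) (k : V * V) : option nat :=
  if w == k.1 then Some 0
  else if w == k.2 then colour_offset (c k.1 k.2) (edge_prime k) else None.

Definition vertex_block w k : {perm 'I_npoints.+1} :=
  if offset w k is Some s then segperm npoints s (s + edge_prime k) else 1%g.

Definition embed w : {perm (V * V) * 'I_npoints.+1} := blockperm (vertex_block w).

Definition support w := [set k | offset w k].

Lemma edge_prime_prime k : prime (edge_prime k).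
Proof. exact: nth_prime_prime. Qed.

Lemma edge_prime_inj : injective edge_prime.
Proof. by move=> k k' /nth_prime_inj/ord_inj/enum_rank_inj. Qed.

Lemma edge_prime_gt1 k : 1 < edge_prime k.
Proof. exact/prime_gt1/edge_prime_prime. Qed.

Lemma edge_prime_double_leq k : (edge_prime k).*2 <= npoints.
Proof.
rewrite leq_double dvdn_leq //.
  by rewrite prodn_gt0 // => k'; apply/prime_gt0/edge_prime_prime.
by rewrite /edge_prime_prod (bigD1 k) //= dvdn_mulr.
Qed.

Lemma offset_first a b : offset a (a, b) = Some 0.
Proof. by rewrite /offset eqxx. Qed.

Lemma offset_second a b :
  a != b -> offset b (a, b) = colour_offset (c a b) (edge_prime (a, b)).
Proof. by rewrite /offset /= eq_sym => /negbTE ->; rewrite eqxx. Qed.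

Lemma offset_endpoint w k : offset w k -> w = k.1 \/ w = k.2.
Proof. by rewrite /offset; do 2?case: eqP => [->|_]; auto. Qed.

Lemma offset_pair u v k :
  u != v -> offset u k -> offset v k -> k = (u, v) \/ k = (v, u).
Proof.
case: k => a b uv /offset_endpoint[]/= ? /offset_endpoint[]/= ?; subst;
  by rewrite ?eqxx in uv; auto.
Qed.

Local Open Scope group_scope.

Lemma vertex_block_period w k : vertex_block w k ^+ edge_prime k = 1.
Proof.
rewrite /vertex_block; case: (offset w k) => [s|]; last exact: expg1n.
by have := segperm_period npoints s (s + edge_prime k); rewrite addKn.
Qed.

Lemma embed_order_dvdn w : #[embed w] %| \prod_(k in support w) edge_prime k.
Proof.
apply: order_blockperm_dvdn => k; first exact: vertex_block_period.
by rewrite inE /vertex_block; case: (offset w k).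
Qed.

Lemma embed_exp_prod w : embed w ^+ edge_prime_prod = 1.
Proof.
apply/eqP; rewrite -order_dvdn.
apply: (order_blockperm_dvdn (A := predT)) => k //; exact: vertex_block_period.
Qed.

Lemma vertex_block_commute u v k : u != v -> c u v <> Blue ->
  commute (vertex_block u k) (vertex_block v k).
Proof.
move=> uv not_blue; rewrite /vertex_block.
case ou: (offset u k) => [s|]; last by apply: commute_sym; apply: commute1.
case ov: (offset v k) => [t|]; last exact: commute1.
have := offset_pair (k := k) uv; rewrite ou ov => /(_ isT isT) [] ek; move: ou ov; rewrite ek.
  rewrite offset_first offset_second //.
  by case: (c u v) not_blue => // _ [<-] [<-]; apply: segperm_commute; rewrite add0n.
rewrite offset_first offset_second 1?eq_sym // c_sym.
case: (c u v) not_blue => // _ [<-] [<-].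
by apply: commute_sym; apply: segperm_commute; rewrite add0n.
Qed.

Lemma embed_commute u v : u != v -> c u v <> Blue -> commute (embed u) (embed v).
Proof. by move=> uv not_blue; apply: blockperm_commute => k; exact: vertex_block_commute. Qed.

Lemma embed_red_cyclic u v :
  u != v -> c u v = Red -> cyclic <<[set embed u; embed v]>>.
Proof.
move=> uv red; apply: cyclic_commute_coprime.
  by apply: embed_commute => //; rewrite red.
have disjoint_supports : [disjoint support u & support v].
  apply/pred0P => k /=; rewrite !inE; apply/negP => /andP[ou ov].
  have [ek|ek] := offset_pair uv ou ov; move: ou ov; rewrite ek.
    by rewrite offset_second // red.
  by rewrite offset_second 1?eq_sym // c_sym red.
apply: coprime_dvdl (embed_order_dvdn u) (coprime_dvdr (embed_order_dvdn v) _).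
exact: coprime_prod_disjoint edge_prime_prime edge_prime_inj _ _ disjoint_supports.
Qed.

Lemma embed_green_not_cyclic u v : u != v -> c u v = Green ->
  ~~ cyclic <<[set embed u; embed v]>>.
Proof.
move=> uv green; set k := (u, v); set p := edge_prime k.
have p_gt1 : 1 < p := edge_prime_gt1 k.
have p2 : p.*2 <= npoints := edge_prime_double_leq k.
(* Raising to the power m kills every block but k. *)
pose m := (\prod_(k' | k' != k) edge_prime k')%N.
have p_ndvd_m : ~~ (p %| m).
  by rewrite (prime_dvd_prod_distinct edge_prime_prime edge_prime_inj) eqxx.
have expp w : (embed w ^+ m) ^+ p = 1.
  by rewrite -expgM mulnC -(embed_exp_prod w) /edge_prime_prod (bigD1 k).
have block_u : vertex_block u k = segperm npoints 0 p.
  by rewrite /vertex_block offset_first add0n.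
have block_v : vertex_block v k = segperm npoints p (p + p).
  by rewrite /vertex_block offset_second // green.
have nt_y : embed v ^+ m != 1.
  apply: contra p_ndvd_m; rewrite blockpermX -blockperm1.
  move=> /eqP/blockperm_inj/(_ k)/eqP.
  by rewrite block_v segpermX_eq1 ?addnK //; lia.
apply/negP => cyc.
have /cycleP[j] := cyclic_mem_cycle_prime cyc (edge_prime_prime k)
  (groupX m (mem_gen (set21 _ _))) (groupX m (mem_gen (set22 _ _))) (expp u) (expp v) nt_y.
rewrite -expgM !blockpermX => /blockperm_inj/(_ k); rewrite block_u block_v.
move=> /segpermX_disjoint_eq block_eq.
have /eqP : segperm npoints 0 p ^+ m = 1 by apply: block_eq; lia.
by rewrite segpermX_eq1 ?subn0 ?(negPf p_ndvd_m) //; lia.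
Qed.

Lemma embed_blue_not_commute u v : u != v -> c u v = Blue ->
  embed u * embed v != embed v * embed u.
Proof.
move=> uv blue; set k := (u, v); set p := edge_prime k.
have p_gt1 : 1 < p := edge_prime_gt1 k.
have p2 : p.*2 <= npoints := edge_prime_double_leq k.
rewrite !blockpermM; apply/negP => /eqP/blockperm_inj/(_ k)/eqP.
rewrite /vertex_block offset_first offset_second // blue /= add0n add1n -/p.
by apply/negP/segperm_shift_noncommute; lia.
Qed.

Lemma embed_inj : injective embed.
Proof.
move=> u v; apply: contra_eq => uv; set k := (u, u).
have p_gt1 : 1 < edge_prime k := edge_prime_gt1 k.
have p2 : (edge_prime k).*2 <= npoints := edge_prime_double_leq k.
apply/negP => /eqP/blockperm_inj/(_ k); rewrite /vertex_block offset_first add0n.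
have -> : offset v k = None by rewrite /offset /= eq_sym (negPf uv).
move/eqP; rewrite -[segperm _ _ _]expg1 segpermX_eq1 ?subn0 ?dvdn1; lia.
Qed.

End Construction.

Theorem mainTheorem13 (V : finType) (c : V -> V -> colour)
  (c_sym : forall u v, c u v = c v u) :
  exists (gT : finGroupType) (iota : V -> gT),
    injective iota /\
    forall u v : V, u != v ->
      (c u v = Red -> epg_adj (iota u) (iota v)) /\
      (c u v = Green -> comm_adj (iota u) (iota v) /\ ~~ epg_adj (iota u) (iota v)) /\
      (c u v = Blue -> ~~ comm_adj (iota u) (iota v)).
Proof.
exists _, (embed c); split; first exact: embed_inj.
move=> u v uv; have embed_uv : embed c u != embed c v by rewrite (inj_eq (@embed_inj _ c)).
rewrite /epg_adj /comm_adj embed_uv /=; split; [|split].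
- exact: embed_red_cyclic.
- move=> green; rewrite embed_green_not_cyclic //; split => //.
  by apply/eqP/embed_commute; rewrite ?green.
- by move=> blue; apply: embed_blue_not_commute.
Qed.
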